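(* Let $S$ be an abundant semigroup with a quasi-ideal adequate transversal $S^0$. Then $S$ is quasi-adequate if and only if $\overline{xy}=\overline{x}\,\overline{y}$ for all $x,y\in S$.
   Context: For a semigroup $S$, $S^1$ is $S$ with an identity adjoined, $\mathcal{L},\mathcal{R}$ Green's relations. $\mathcal{R}^\ast=\{(a,b):\forall x,y\in S^1,\ xa=ya\iff xb=yb\}$, $\mathcal{L}^\ast=\{(a,b):\forall x,y\in S^1,\ ax=ay\iff bx=by\}$. $S$ is abundant if each $\mathcal{R}^\ast$- and $\mathcal{L}^\ast$-class contains an idempotent; adequate if also idempotents commute (then $a^+$, $a^\ast$ are the unique idempotents $\mathcal{R}^\ast$-, resp. $\mathcal{L}^\ast$-related to $a$). Quasi-adequate: abundant with idempotents forming a subsemigroup. An abundant subsemigroup $U$ of abundant $S$ is a $\ast$-subsemigroup if $\mathcal{L}^\ast(U)=\mathcal{L}^\ast(S)\cap(U\times U)$, $\mathcal{R}^\ast(U)=\mathcal{R}^\ast(S)\cap(U\times U)$. An adequate $\ast$-subsemigroup $S^0$ of abundant $S$ is an adequate transversal if each $x\in S$ has a unique $\overline{x}\in S^0$ and idempotents $e,f$ of $S$ with $x=e\overline{x}f$, $e\,\mathcal{L}\,\overline{x}^+$, $f\,\mathcal{R}\,\overline{x}^\ast$. It is a quasi-ideal if $S^0SS^0\subseteq S^0$. *)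

Set Implicit Arguments.
Unset Strict Implicit.

Section Semigroup.
Variable T : Type.
Variable mul : T -> T -> T.

(* S^1 modelled as option T, None being the adjoined identity. *)
Definition lmul1 (x : option T) (a : T) : T :=
  match x with None => a | Some x => mul x a end.
Definition rmul1 (a : T) (x : option T) : T :=
  match x with None => a | Some x => mul a x end.

Definition in1 (U : T -> Prop) (x : option T) : Prop :=
  match x with None => True | Some x => U x end.

Definition idem (e : T) : Prop := mul e e = e.

Definition GreenL (a b : T) : Prop :=
  (exists u : option T, a = lmul1 u b) /\ (exists v : option T, b = lmul1 v a).

Definition GreenR (a b : T) : Prop :=
  (exists u : option T, a = rmul1 b u) /\ (exists v : option T, b = rmul1 a v).

Definition Rstar_in (U : T -> Prop) (a b : T) : Prop :=
  forall x y : option T, in1 U x -> in1 U y ->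
    (lmul1 x a = lmul1 y a <-> lmul1 x b = lmul1 y b).
Definition Lstar_in (U : T -> Prop) (a b : T) : Prop :=
  forall x y : option T, in1 U x -> in1 U y ->
    (rmul1 a x = rmul1 a y <-> rmul1 b x = rmul1 b y).

Definition allS : T -> Prop := fun _ => True.
Definition Rstar := Rstar_in allS.
Definition Lstar := Lstar_in allS.

Definition subsemigroup (U : T -> Prop) : Prop :=
  forall a b, U a -> U b -> U (mul a b).

Definition abundant_in (U : T -> Prop) : Prop :=
  forall a, U a ->
    (exists e, U e /\ idem e /\ Rstar_in U a e) /\
    (exists f, U f /\ idem f /\ Lstar_in U a f).

Definition abundant : Prop := abundant_in allS.

Definition quasi_adequate : Prop :=
  abundant /\ (forall e f, idem e -> idem f -> idem (mul e f)).

Definition adequate_in (U : T -> Prop) : Prop :=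
  abundant_in U /\
  (forall e f, U e -> U f -> idem e -> idem f -> mul e f = mul f e).

Definition star_subsemigroup (U : T -> Prop) : Prop :=
  subsemigroup U /\ abundant_in U /\
  (forall a b, U a -> U b -> (Lstar_in U a b <-> Lstar a b)) /\
  (forall a b, U a -> U b -> (Rstar_in U a b <-> Rstar a b)).

(* b is a possible value of \bar x : b in S0 and x = e b f with e, f
   idempotents of S, e L b^+, f R b^*, where b^+ (resp. b^star) is the
   idempotent of S0 that is R*- (resp. L*-) related to b. *)
Definition is_bar (S0 : T -> Prop) (x b : T) : Prop :=
  S0 b /\ exists e f, idem e /\ idem f /\ x = mul (mul e b) f /\
    (exists p, S0 p /\ idem p /\ Rstar b p /\ GreenL e p) /\
    (exists q, S0 q /\ idem q /\ Lstar b q /\ GreenR f q).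

Definition adequate_transversal (S0 : T -> Prop) : Prop :=
  adequate_in S0 /\ star_subsemigroup S0 /\
  forall x, (exists b, is_bar S0 x b) /\
            (forall b b', is_bar S0 x b -> is_bar S0 x b' -> b = b').

Definition quasi_ideal (S0 : T -> Prop) : Prop :=
  forall a s b, S0 a -> S0 b -> S0 (mul (mul a s) b).

End Semigroup.


Set Implicit Arguments.
Unset Strict Implicit.

(* Write [x = e xb f] and [y = e' yb f'] with [e L xb^+], [f R xb^*], etc.
   If the idempotents of S form a subsemigroup, the uniqueness of bars
   forces [f e' = yb^+ xb^*], so the middle of [x y] collapses and
   [x y = e (xb yb) f'] exhibits [xb yb] as the bar of [x y].  Conversely,
   if bars are multiplicative then any [s z t] with [s, t] in [S0] equals
   [s zb t] (both lie in the quasi-ideal [S0] and have the same bar), which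
   lets one collapse the middle of [(e f)^2] for idempotents [e, f]. *)

Section Semigroup.
Variable T : Type.
Variable mul : T -> T -> T.
Hypothesis assoc : forall a b c, mul a (mul b c) = mul (mul a b) c.
Local Infix "**" := mul (at level 40, left associativity).

Definition idem_closed : Prop :=
  forall e f, idem mul e -> idem mul f -> idem mul (e ** f).

Lemma Rstar_idem_mul_l p b : idem mul p -> Rstar mul b p -> p ** b = b.
Proof. intros Ip Rbp. exact (proj2 (Rbp (Some p) None I I) Ip). Qed.

Lemma Lstar_idem_mul_r q b : idem mul q -> Lstar mul b q -> b ** q = b.
Proof. intros Iq Lbq. exact (proj2 (Lbq (Some q) None I I) Iq). Qed.

Lemma GreenL_idem e p :
  idem mul e -> idem mul p -> GreenL mul e p -> e ** p = e /\ p ** e = p.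
Proof.
  unfold idem; intros Ie Ip [[[u|] Hu] [[v|] Hv]]; simpl in Hu, Hv; split;
    try (subst e; rewrite <- ?assoc, ?Ip; reflexivity);
    subst p; rewrite <- ?assoc, ?Ie; reflexivity.
Qed.

Lemma GreenR_idem f q :
  idem mul f -> idem mul q -> GreenR mul f q -> q ** f = f /\ f ** q = q.
Proof.
  unfold idem; intros If Iq [[[u|] Hu] [[v|] Hv]]; simpl in Hu, Hv; split;
    try (subst f; rewrite ?assoc, ?Iq; reflexivity);
    subst q; rewrite ?assoc, ?If; reflexivity.
Qed.

Lemma GreenL_intro e p : e ** p = e -> p ** e = p -> GreenL mul e p.
Proof. intros ep pe; split; [exists (Some e) | exists (Some p)]; simpl; auto. Qed.

Lemma GreenR_intro f q : q ** f = f -> f ** q = q -> GreenR mul f q.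
Proof. intros qf fq; split; [exists (Some f) | exists (Some q)]; simpl; auto. Qed.

Lemma idem_mul_absorb_l e r :
  idem mul r -> r ** e = r -> idem mul (e ** r) /\ GreenL mul (e ** r) r.
Proof.
  unfold idem; intros Ir re; split.
  - rewrite assoc, <- (assoc e r e), re, <- assoc, Ir; reflexivity.
  - apply GreenL_intro; [rewrite <- assoc, Ir | rewrite assoc, re, Ir]; reflexivity.
Qed.

Lemma idem_mul_absorb_r f s :
  idem mul s -> f ** s = s -> idem mul (s ** f) /\ GreenR mul (s ** f) s.
Proof.
  unfold idem; intros Is fs; split.
  - rewrite assoc, <- (assoc s f s), fs, Is; reflexivity.
  - apply GreenR_intro; [rewrite assoc, Is | rewrite <- assoc, fs, Is]; reflexivity.
Qed.

Section Transversal.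
Variable S0 : T -> Prop.
Hypothesis Htrans : adequate_transversal mul S0.
Hypothesis Hqi : quasi_ideal mul S0.

Lemma S0_mul a b : S0 a -> S0 b -> S0 (a ** b).
Proof. destruct Htrans as [_ [[Hsub _] _]]; auto. Qed.

Lemma S0_idem_comm e f :
  S0 e -> S0 f -> idem mul e -> idem mul f -> e ** f = f ** e.
Proof. destruct Htrans as [[_ Hcomm] _]; auto. Qed.

Lemma S0_idem_mul e f :
  S0 e -> S0 f -> idem mul e -> idem mul f -> idem mul (e ** f).
Proof.
  unfold idem; intros Se Sf Ie If.
  rewrite <- assoc, (assoc f e f), <- (S0_idem_comm Se Sf Ie If).
  rewrite <- assoc, If, assoc, Ie; reflexivity.
Qed.

Lemma S0_plus b : S0 b -> exists r, S0 r /\ idem mul r /\ Rstar mul b r.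
Proof.
  destruct Htrans as [_ [[_ [Hab [_ HR]]] _]]; intros Sb.
  destruct (proj1 (Hab b Sb)) as [r [Sr [Ir Rbr]]].
  exists r; split; [|split]; auto; apply HR; auto.
Qed.

Lemma S0_star b : S0 b -> exists s, S0 s /\ idem mul s /\ Lstar mul b s.
Proof.
  destruct Htrans as [_ [[_ [Hab [HL _]]] _]]; intros Sb.
  destruct (proj2 (Hab b Sb)) as [s [Ss [Is Lbs]]].
  exists s; split; [|split]; auto; apply HL; auto.
Qed.

Lemma is_bar_exists x : exists b, is_bar mul S0 x b.
Proof. destruct Htrans as [_ [_ Hbar]]; exact (proj1 (Hbar x)). Qed.

Lemma is_bar_unique x b b' : is_bar mul S0 x b -> is_bar mul S0 x b' -> b = b'.
Proof. destruct Htrans as [_ [_ Hbar]]; exact (proj2 (Hbar x) b b'). Qed.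

(* [is_bar] with the Green relations between idempotents unfolded into
   absorption equations, and [b^+], [b^*] weakened to any idempotents of
   [S0] fixing [b]. *)
Variant bar_spec (x b : T) : Prop :=
  BarSpec (e f p q : T) :
    S0 b ->
    S0 p -> idem mul p -> idem mul e -> e ** p = e -> p ** e = p -> p ** b = b ->
    S0 q -> idem mul q -> idem mul f -> q ** f = f -> f ** q = q -> b ** q = b ->
    x = e ** b ** f -> bar_spec x b.

Lemma is_barP x b : is_bar mul S0 x b -> bar_spec x b.
Proof.
  intros [Sb [e [f [Ie [If [Ex [[p [Sp [Ip [Rbp Gep]]]] [q [Sq [Iq [Lbq Gfq]]]]]]]]]]].
  destruct (GreenL_idem Ie Ip Gep) as [ep pe].
  destruct (GreenR_idem If Iq Gfq) as [qf fq].
  exact (BarSpec Sb Sp Ip Ie ep pe (Rstar_idem_mul_l Ip Rbp)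
                 Sq Iq If qf fq (Lstar_idem_mul_r Iq Lbq) Ex).
Qed.

(* The idempotents witnessing the bar are [e b^+] and [b^* f]. *)
Lemma is_bar_sandwich e f p q b :
  S0 p -> idem mul p -> p ** e = p -> S0 q -> idem mul q -> f ** q = q ->
  S0 b -> p ** b = b -> b ** q = b -> is_bar mul S0 (e ** b ** f) b.
Proof.
  intros Sp Ip pe Sq Iq fq Sb pb bq.
  destruct (S0_plus Sb) as [r [Sr [Ir Rbr]]].
  destruct (S0_star Sb) as [s [Ss [Is Lbs]]].
  assert (rb : r ** b = b) by exact (Rstar_idem_mul_l Ir Rbr).
  assert (bs : b ** s = b) by exact (Lstar_idem_mul_r Is Lbs).
  assert (pr : p ** r = r) by exact (proj1 (Rbr (Some p) None I I) pb).
  assert (sq : s ** q = s) by exact (proj1 (Lbs (Some q) None I I) bq).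
  assert (re : r ** e = r).
  { assert (rp : r ** p = r) by (rewrite (@S0_idem_comm r p); auto).
    rewrite <- rp, <- assoc, pe; reflexivity. }
  assert (fs : f ** s = s).
  { assert (qs : q ** s = s) by (rewrite (@S0_idem_comm q s); auto).
    rewrite <- qs, assoc, fq; reflexivity. }
  destruct (idem_mul_absorb_l Ir re) as [Ier Ger].
  destruct (idem_mul_absorb_r Is fs) as [Isf Gsf].
  split; [exact Sb |].
  exists (e ** r), (s ** f); repeat split; auto.
  - rewrite !assoc, <- (assoc e r b), rb, <- (assoc e b s), bs; reflexivity.
  - exists r; auto.
  - exists s; auto.
Qed.

Lemma is_bar_conj e f p q v :
  S0 p -> idem mul p -> e ** p = e -> p ** e = p ->
  S0 q -> idem mul q -> q ** f = f -> f ** q = q ->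
  S0 v -> is_bar mul S0 (e ** v ** f) (p ** v ** q).
Proof.
  intros Sp Ip ep pe Sq Iq qf fq Sv.
  assert (Hpvq : e ** v ** f = e ** (p ** v ** q) ** f).
  { rewrite !assoc, ep, <- (assoc (e ** v) q f), qf; reflexivity. }
  rewrite Hpvq; apply (is_bar_sandwich Sp Ip pe Sq Iq fq).
  - apply S0_mul; [apply S0_mul|]; auto.
  - unfold idem in Ip; rewrite !assoc, Ip; reflexivity.
  - unfold idem in Iq; rewrite <- assoc, Iq; reflexivity.
Qed.

(* Both [e (p q) f] and [e (f e) f] equal [e f], so their bars [p q] and
   [f e] coincide; [f e] lies in [S0] by the quasi-ideal property. *)
Lemma idem_closed_mul_swap e f p q :
  S0 p -> idem mul p -> idem mul e -> e ** p = e -> p ** e = p ->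
  S0 q -> idem mul q -> idem mul f -> q ** f = f -> f ** q = q ->
  idem_closed -> f ** e = p ** q.
Proof.
  intros Sp Ip Ie ep pe Sq Iq If qf fq Hclosed.
  assert (Sfe : S0 (f ** e)).
  { pose proof (Hqi (f ** e) Sq Sp) as H.
    rewrite assoc, qf, <- assoc, ep in H; exact H. }
  pose proof (is_bar_conj Sp Ip ep pe Sq Iq qf fq (S0_mul Sp Sq)) as Bpq.
  pose proof (is_bar_conj Sp Ip ep pe Sq Iq qf fq Sfe) as Bfe.
  replace (e ** (p ** q) ** f) with (e ** f) in Bpq
    by (rewrite assoc, ep, <- assoc, qf; reflexivity).
  replace (p ** (p ** q) ** q) with (p ** q) in Bpq
    by (unfold idem in Ip, Iq; rewrite assoc, Ip, <- assoc, Iq; reflexivity).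
  replace (e ** (f ** e) ** f) with (e ** f) in Bfe
    by (rewrite assoc, <- (assoc (e ** f) e f); exact (eq_sym (Hclosed e f Ie If))).
  replace (p ** (f ** e) ** q) with (f ** e) in Bfe.
  - exact (is_bar_unique Bfe Bpq).
  - rewrite (@S0_idem_comm p (f ** e)), <- (assoc f e p), ep; auto.
    rewrite <- (@S0_idem_comm q (f ** e)), assoc, qf; auto.
Qed.

Lemma is_bar_S0 a : S0 a -> is_bar mul S0 a a.
Proof.
  intros Sa.
  destruct (S0_plus Sa) as [p [Sp [Ip Rap]]].
  destruct (S0_star Sa) as [q [Sq [Iq Laq]]].
  pose proof (is_bar_sandwich Sp Ip Ip Sq Iq Iq Sa
              (Rstar_idem_mul_l Ip Rap) (Lstar_idem_mul_r Iq Laq)) as B.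
  rewrite (Rstar_idem_mul_l Ip Rap), (Lstar_idem_mul_r Iq Laq) in B; exact B.
Qed.

Lemma is_bar_absorb_l g p :
  S0 p -> idem mul p -> g ** p = g -> p ** g = p -> is_bar mul S0 g p.
Proof.
  intros Sp Ip gp pg.
  pose proof (is_bar_sandwich Sp Ip pg Sp Ip Ip Sp Ip Ip) as B.
  rewrite <- assoc, Ip, gp in B; exact B.
Qed.

Lemma is_bar_absorb_r h q :
  S0 q -> idem mul q -> q ** h = h -> h ** q = q -> is_bar mul S0 h q.
Proof.
  intros Sq Iq qh hq.
  pose proof (is_bar_sandwich Sq Iq Iq Sq Iq hq Sq Iq Iq) as B.
  rewrite Iq, qh in B; exact B.
Qed.

Lemma bar_mul_of_idem_closed x y xb yb :
  idem_closed -> is_bar mul S0 x xb -> is_bar mul S0 y yb ->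
  is_bar mul S0 (x ** y) (xb ** yb).
Proof.
  intros Hclosed Hx Hy.
  destruct (is_barP Hx) as [e1 f1 p1 q1 Sxb Sp1 Ip1 _ _ p1e1 p1xb
                            Sq1 Iq1 If1 q1f1 f1q1 xbq1 Ex].
  destruct (is_barP Hy) as [e2 f2 p2 q2 Syb Sp2 Ip2 Ie2 e2p2 p2e2 p2yb
                            Sq2 Iq2 _ _ f2q2 ybq2 Ey].
  assert (Hswap : f1 ** e2 = p2 ** q1)
    by exact (idem_closed_mul_swap Sp2 Ip2 Ie2 e2p2 p2e2 Sq1 Iq1 If1 q1f1 f1q1 Hclosed).
  assert (Hmid : xb ** (f1 ** e2) ** yb = xb ** yb).
  { rewrite Hswap, (@S0_idem_comm p2 q1), assoc, xbq1, <- assoc, p2yb; auto. }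
  assert (Hxy : x ** y = e1 ** (xb ** yb) ** f2).
  { rewrite Ex, Ey, <- Hmid, !assoc; reflexivity. }
  rewrite Hxy; apply (is_bar_sandwich Sp1 Ip1 p1e1 Sq2 Iq2 f2q2).
  - exact (S0_mul Sxb Syb).
  - rewrite assoc, p1xb; reflexivity.
  - rewrite <- assoc, ybq2; reflexivity.
Qed.

Section Multiplicative.
Hypothesis Hmult : forall x y xb yb,
  is_bar mul S0 x xb -> is_bar mul S0 y yb -> is_bar mul S0 (x ** y) (xb ** yb).

Lemma S0_sandwich_bar s t z zb :
  S0 s -> S0 t -> is_bar mul S0 z zb -> s ** z ** t = s ** zb ** t.
Proof.
  intros Ss St Hz.
  exact (is_bar_unique (is_bar_S0 (Hqi z Ss St))
           (Hmult (Hmult (is_bar_S0 Ss) Hz) (is_bar_S0 St))).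
Qed.

Lemma is_bar_idem e a : idem mul e -> is_bar mul S0 e a -> idem mul a.
Proof.
  intros Ie Ha.
  pose proof (Hmult Ha Ha) as Haa.
  rewrite Ie in Haa; exact (is_bar_unique Haa Ha).
Qed.

Lemma idem_closed_of_bar_mul : idem_closed.
Proof.
  intros e f Ie If.
  destruct (is_bar_exists e) as [a Ha]; pose proof (is_bar_idem Ie Ha) as Ia.
  destruct (is_bar_exists f) as [b Hb]; pose proof (is_bar_idem If Hb) as Ib.
  destruct (is_barP Ha) as [g1 h1 p1 q1 Sa Sp1 Ip1 _ g1p1 p1g1 p1a
                            Sq1 Iq1 _ q1h1 h1q1 aq1 Ee].
  destruct (is_barP Hb) as [g2 h2 p2 q2 Sb Sp2 Ip2 _ g2p2 p2g2 p2b
                            Sq2 Iq2 _ q2h2 h2q2 bq2 Ef].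
  pose proof (is_bar_absorb_r Sq1 Iq1 q1h1 h1q1) as Bh1.
  pose proof (is_bar_absorb_l Sp1 Ip1 g1p1 p1g1) as Bg1.
  pose proof (is_bar_absorb_r Sq2 Iq2 q2h2 h2q2) as Bh2.
  pose proof (is_bar_absorb_l Sp2 Ip2 g2p2 p2g2) as Bg2.
  set (u := a ** b).
  assert (Su : S0 u) by exact (S0_mul Sa Sb).
  assert (Iu : idem mul u) by exact (S0_idem_mul Sa Sb Ia Ib).
  assert (Hmid1 : a ** (h1 ** g2) ** b = u).
  { rewrite (S0_sandwich_bar Sa Sb (Hmult Bh1 Bg2)), assoc, aq1, <- assoc, p2b.
    reflexivity. }
  assert (Hmid2 : u ** (h2 ** g1) ** u = u).
  { assert (uq2 : u ** q2 = u) by (unfold u; rewrite <- assoc, bq2; reflexivity).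
    assert (p1u : p1 ** u = u) by (unfold u; rewrite assoc, p1a; reflexivity).
    rewrite (S0_sandwich_bar Su Su (Hmult Bh2 Bg1)), assoc, uq2, <- assoc, p1u.
    exact Iu. }
  assert (Eef : e ** f = g1 ** u ** h2).
  { rewrite Ee, Ef, <- Hmid1, !assoc; reflexivity. }
  unfold idem; rewrite Eef.
  transitivity (g1 ** (u ** (h2 ** g1) ** u) ** h2).
  - rewrite !assoc; reflexivity.
  - rewrite Hmid2; reflexivity.
Qed.

End Multiplicative.
End Transversal.
End Semigroup.

Theorem proposition2p7 (T : Type) (mul : T -> T -> T)
  (assoc : forall a b c, mul a (mul b c) = mul (mul a b) c)
  (S0 : T -> Prop)
  (Habund : abundant mul)
  (Htrans : adequate_transversal mul S0)
  (Hqi : quasi_ideal mul S0) :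
  quasi_adequate mul <->
  (forall x y xb yb, is_bar mul S0 x xb -> is_bar mul S0 y yb ->
     is_bar mul S0 (mul x y) (mul xb yb)).
Proof.
  split.
  - intros [_ Hclosed] x y xb yb.
    exact (bar_mul_of_idem_closed assoc Htrans Hqi Hclosed).
  - intros Hmult; split; [exact Habund |].
    exact (idem_closed_of_bar_mul assoc Htrans Hqi Hmult).
Qed.
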